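(* Let $G$ be a finite graph with maximum degree $\Delta \geq 2^{64}$, and let $r=\lceil 400\Delta/\log\Delta\rceil$. Then there exists a partition $V(G)=V_1\uplus\cdots\uplus V_r$ such that for every vertex $v\in V(G)$ and every $i\in[r]$, $|N_G(v)\cap V_i| \leq \frac12\log\Delta$.
   Context: $\log$ denotes the logarithm to base 2; $N_G(v)$ is the set of neighbours of $v$ in $G$; $[r]=\{1,\dots,r\}$. Parts of the partition are allowed to be empty. *)

From Stdlib Require Import Reals.
From mathcomp Require Import all_boot.
Set Implicit Arguments.
Unset Strict Implicit.

Definition log2 (x : R) : R := Rdiv (ln x) (ln (IZR 2)).

(* A finite simple graph is a symmetric irreflexive relation e on a finType T.
   N_G(v) = [set u | e v u]. *)
Definition nbhd (T : finType) (e : rel T) (v : T) : {set T} := [set u | e v u].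

Definition maxdeg (T : finType) (e : rel T) : nat := \max_(v : T) #|nbhd e v|.

(* Colour the vertices uniformly at random with r colours and let
   m = floor(log Delta / 2) + 1.  The event A_v that some colour occurs at least
   m times in N(v) is determined by the colours on N(v), so it is independent of
   every family of events A_w with N(w) disjoint from N(v), i.e. of all but at most
   Delta^2 of them.  By a union bound P(A_v) <= r C(Delta, m) r^-m, and the choice
   of r makes this at most 1/(4(Delta^2 + 1)); the symmetric Lovasz Local Lemma,
   proved below by counting in the finite product space of colourings, then gives
   a colouring avoiding every A_v. *)

From Stdlib Require Import Reals ZArith Lra Lia.
From mathcomp Require Import all_boot zify.
Set Implicit Arguments.
Unset Strict Implicit.
Unset Printing Implicit Defensive.

Lemma card_bigcup_le (T I : finType) (P : pred I) (F : I -> {set T}) :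
  #|\bigcup_(i | P i) F i| <= \sum_(i | P i) #|F i|.
Proof.
elim/big_rec2: _ => [|i n U _ IH]; first by rewrite cards0.
by rewrite (leq_trans (leq_card_setU _ _)) ?leq_add2l.
Qed.

Section Independence.
Variables I C : finType.
Notation Om := {ffun I -> C}.
Implicit Types (S : {set I}) (P Q : {set Om}).

Definition depends_on S P :=
  forall f g : Om, {in S, f =1 g} -> (f \in P) = (g \in P).

(* Exchanging the coordinates in S maps P x Q bijectively onto (P :&: Q) x Om. *)
Lemma card_setI_depends_on S P Q :
  depends_on S P -> depends_on (~: S) Q -> #|P :&: Q| * #|Om| = #|P| * #|Q|.
Proof.
move=> dP dQ; pose splice (f g : Om) : Om := [ffun i => if i \in S then f i else g i].
pose swap (p : Om * Om) := (splice p.1 p.2, splice p.2 p.1).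
have swapK : involutive swap.
  move=> [f g]; rewrite /swap /=.
  by congr pair; apply/ffunP => i; rewrite !ffunE; case: (i \in S).
rewrite -cardsT -!cardsX -[RHS](card_preimset _ (inv_inj swapK)).
apply: eq_card => -[f g]; rewrite !inE /= andbT.
rewrite (dP (splice f g) f) => [|i iS]; last by rewrite ffunE iS.
by rewrite (dQ (splice g f) f) // => i; rewrite inE ffunE => /negbTE ->.
Qed.

End Independence.

Section LovaszLocalLemma.
Variables I C J : finType.
Notation Om := {ffun I -> C}.
Variables (A : J -> {set Om}) (S : J -> {set I}) (q : nat).

Implicit Types (j : J) (K L : {set J}).

Definition dep_nbhd (j : J) : {set J} := [set k | (k != j) && (S k :&: S j != set0)].

Hypothesis A_depends : forall j, depends_on (S j) (A j).
Hypothesis card_A : forall j, q * #|A j| <= #|Om|.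
Hypothesis card_dep_nbhd : forall j, 4 * #|dep_nbhd j| <= q.
Hypothesis q_ge4 : 4 <= q.
Hypothesis C_gt0 : 0 < #|C|.

Definition avoiding (K : {set J}) : {set Om} := [set f | [forall k in K, f \notin A k]].

Lemma avoidingS K L : L \subset K -> avoiding K \subset avoiding L.
Proof.
move=> sLK; apply/subsetP => f; rewrite !inE => /forall_inP avK.
by apply/forall_inP => k /(subsetP sLK); apply: avK.
Qed.

Lemma avoiding_depends K j :
  {in K, forall k, S k :&: S j = set0} -> depends_on (~: S j) (avoiding K).
Proof.
move=> disjK f g fg; rewrite !inE; apply: eq_forallb => k.
case kK: (k \in K) => //=; congr negb; apply: A_depends => i ik.
apply: fg; rewrite inE; apply: contraT; rewrite negbK => ij.
by have /setP/(_ i) := disjK k kK; rewrite !inE ik ij.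
Qed.

Lemma card_Om_gt0 : 0 < #|Om|.
Proof. by rewrite card_ffun expn_gt0 C_gt0. Qed.

Lemma card_A_avoiding_disjoint K j :
  {in K, forall k, S k :&: S j = set0} -> q * #|A j :&: avoiding K| <= #|avoiding K|.
Proof.
move=> disjK; rewrite -(leq_pmul2r card_Om_gt0) -mulnA.
rewrite (card_setI_depends_on (@A_depends j) (avoiding_depends disjK)).
by rewrite mulnA [#|avoiding K| * _]mulnC leq_mul2r card_A orbT.
Qed.

Lemma card_avoiding_setD K (K1 : {set J}) :
  4 * #|K1| <= q ->
  {in K1, forall k, q * #|A k :&: avoiding (K :\: K1)| <= 2 * #|avoiding (K :\: K1)|} ->
  #|avoiding (K :\: K1)| <= 2 * #|avoiding K|.
Proof.
move=> cardK1 bndK1; set B := avoiding (K :\: K1).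
have cover : B \subset avoiding K :|: \bigcup_(k in K1) (A k :&: B).
  apply/subsetP => f fB; rewrite !inE.
  case: (boolP [forall k in K, f \notin A k]) => [//|/forall_inPn [k kK]].
  rewrite negbK => fAk; apply/bigcupP; exists k; last by rewrite inE fAk.
  apply: contraT => kK1; move: fB; rewrite inE => /forall_inP/(_ k).
  by rewrite inE kK1 kK fAk => /(_ isT).
have union_bound : #|B| <= #|avoiding K| + \sum_(k in K1) #|A k :&: B|.
  apply: leq_trans (subset_leq_card cover) _.
  by rewrite (leq_trans (leq_card_setU _ _)) ?leq_add2l ?card_bigcup_le.
have sum_bound : q * \sum_(k in K1) #|A k :&: B| <= #|K1| * (2 * #|B|).
  by rewrite big_distrr -sum_nat_const leq_sum.
nia.
Qed.

Lemma card_A_avoiding K j :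
  j \notin K -> q * #|A j :&: avoiding K| <= 2 * #|avoiding K|.
Proof.
elim: {K}_.+1 {-2}K (ltnSn #|K|) j => // n IH K ltKn j jK.
pose K1 := K :&: dep_nbhd j.
have disj : {in K :\: K1, forall k, S k :&: S j = set0}.
  move=> k; rewrite !inE => /andP [+ kK]; rewrite kK /= negb_and negbK.
  by case/orP=> [/eqP kj|/negPn/eqP //]; move: jK; rewrite -kj kK.
have halve : #|avoiding (K :\: K1)| <= 2 * #|avoiding K|.
  have [->|K1n0] := eqVneq K1 set0; first by rewrite setD0 leq_pmull.
  apply: card_avoiding_setD.
    by rewrite (leq_trans _ (card_dep_nbhd j)) // leq_mul2l subset_leq_card ?subsetIr.
  move=> k kK1; apply: IH; last by rewrite inE kK1.
  have : 0 < #|K1| <= #|K| by rewrite card_gt0 K1n0 subset_leq_card ?subsetIl.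
  rewrite cardsDS ?subsetIl //; lia.
apply: leq_trans halve; apply: leq_trans (card_A_avoiding_disjoint disj).
by rewrite leq_mul2l subset_leq_card ?orbT ?setIS ?avoidingS ?subsetDl.
Qed.

Lemma avoiding_gt0 K : 0 < #|avoiding K|.
Proof.
elim: {K}_.+1 {-2}K (ltnSn #|K|) => // n IH K ltKn.
have [->|[j jK]] := set_0Vmem K.
  suff -> : avoiding set0 = setT by rewrite cardsT card_Om_gt0.
  by apply/setP => f; rewrite !inE; apply/forall_inP => k; rewrite inE.
have jK' : j \notin K :\ j by rewrite !inE eqxx.
have E : avoiding K = avoiding (K :\ j) :\: A j.
  apply/setP => f; rewrite !inE; apply/forall_inP/andP => [avK|[fAj /forall_inP avK] k kK].
    split; first exact: avK.
    by apply/forall_inP => k /setD1P [_]; apply: avK.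
  by have [->//|kj] := eqVneq k j; apply: avK; rewrite !inE kj.
have ltK : #|K :\ j| < n by move: ltKn; rewrite (cardsD1 j K) jK.
have := IH _ ltK; have := card_A_avoiding jK'; rewrite E cardsD [avoiding _ :&: _]setIC; nia.
Qed.

Theorem lovasz_local_lemma : exists f : Om, forall j, f \notin A j.
Proof.
have /card_gt0P [f] := avoiding_gt0 setT.
by rewrite inE => /forall_inP avT; exists f => j; apply: avT.
Qed.

End LovaszLocalLemma.

Lemma card_ffun_const_on (T C : finType) (X : {set T}) (c : C) :
  #|[set f : {ffun T -> C} | [forall x in X, f x == c]]| = #|C| ^ #|~: X|.
Proof.
rewrite -(card_pffun_on c (~: X) predT); apply: eq_card => f; rewrite inE.
apply/forall_inP/pfamilyP => [fX|[/subsetP supp _] x xX]; last first.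
  by apply: contraT => fx; have := supp x fx; rewrite inE xX.
by split=> //; apply/subsetP => x; rewrite !inE; apply: contra; apply: fX.
Qed.

Lemma card_nbhd_le_maxdeg (T : finType) (e : rel T) v : #|nbhd e v| <= maxdeg e.
Proof. exact: (leq_bigmax (F := fun v => #|nbhd e v|)). Qed.

Section ColourClasses.
Variables (T : finType) (e : rel T) (r m : nat).
Hypothesis e_sym : symmetric e.
Hypothesis r_gt0 : 0 < r.
Notation D := (maxdeg e).
Notation colouring := {ffun T -> 'I_r}.

Definition overloaded (v : T) : {set colouring} :=
  [set f : colouring | [exists i : 'I_r, m <= #|nbhd e v :&: [set u | f u == i]|]].

Lemma overloaded_depends v : depends_on (nbhd e v) (overloaded v).
Proof.
move=> f g fg; rewrite !inE; apply: eq_existsb => i; congr (m <= _).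
by apply: eq_card => u; rewrite !inE; case: (boolP (e v u)) => //= vu; rewrite fg ?inE.
Qed.

Lemma card_dep_nbhd_nbhd_le v : #|dep_nbhd (nbhd e) v| <= D * D.
Proof.
have sub : dep_nbhd (nbhd e) v \subset \bigcup_(u in nbhd e v) nbhd e u.
  apply/subsetP => w; rewrite inE => /andP [_ /set0Pn [u]].
  rewrite !inE => /andP [wu vu]; apply/bigcupP; exists u; first by rewrite inE.
  by rewrite inE e_sym.
apply: leq_trans (subset_leq_card sub) _; apply: leq_trans (card_bigcup_le _ _) _.
apply: (@leq_trans (\sum_(u in nbhd e v) D)).
  by apply: leq_sum => u _; apply: card_nbhd_le_maxdeg.
by rewrite sum_nat_const leq_mul2r card_nbhd_le_maxdeg orbT.
Qed.

Lemma card_overloaded v : #|overloaded v| * r ^ m <= r * 'C(D, m) * r ^ #|T|.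
Proof.
pose draws := [set X : {set T} | (X \subset nbhd e v) && (#|X| == m)].
pose const_on i (X : {set T}) := [set f : colouring | [forall x in X, f x == i]].
have sub : overloaded v \subset \bigcup_i \bigcup_(X in draws) const_on i X.
  apply/subsetP => f; rewrite inE => /existsP [i cls].
  have : 0 < #|[set X : {set T} | X \subset nbhd e v :&: [set u | f u == i] & #|X| == m]|.
    by rewrite cards_draws bin_gt0.
  case/card_gt0P => X; rewrite inE => /andP [/subsetP sX cX].
  apply/bigcupP; exists i => //; apply/bigcupP; exists X.
    by rewrite inE cX andbT; apply/subsetP => x /sX /setIP [].
  by rewrite inE; apply/forall_inP => x /sX; rewrite !inE => /andP [].
have card_const_on i X : X \in draws -> #|const_on i X| * r ^ m = r ^ #|T|.
  rewrite inE => /andP [_ /eqP <-].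
  by rewrite card_ffun_const_on card_ord -expnD addnC cardsC.
have card_draws : #|draws| <= 'C(D, m).
  by rewrite cards_draws leq_bin2l ?card_nbhd_le_maxdeg.
apply: leq_trans (leq_mul (subset_leq_card sub) (leqnn _)) _.
apply: leq_trans (leq_mul (card_bigcup_le _ _) (leqnn _)) _.
rewrite big_distrl -mulnA -[r in r * _]card_ord -sum_nat_const leq_sum // => i _.
apply: leq_trans (leq_mul (card_bigcup_le _ _) (leqnn _)) _.
rewrite big_distrl (eq_bigr _ (card_const_on i)) sum_nat_const.
by rewrite leq_mul2r card_draws orbT.
Qed.

Lemma exists_colouring_small_classes :
  4 * (D * D + 1) * 'C(D, m) * r <= r ^ m ->
  exists f : colouring, forall v i, #|nbhd e v :&: [set u | f u == i]| < m.
Proof.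
move=> lll_cond.
have card_A v : 4 * (D * D + 1) * #|overloaded v| <= #|colouring|.
  rewrite card_ffun card_ord -(leq_pmul2r (_ : 0 < r ^ m)) ?expn_gt0 ?r_gt0 //.
  rewrite -mulnA (leq_trans (leq_mul (leqnn _) (card_overloaded v))) //.
  by rewrite [r ^ #|T| * _]mulnC mulnA leq_mul2r [r * _]mulnC mulnA lll_cond orbT.
have card_dep v : 4 * #|dep_nbhd (nbhd e) v| <= 4 * (D * D + 1).
  by rewrite leq_mul2l (leq_trans (card_dep_nbhd_nbhd_le v)) ?addn1.
have q_ge4 : 4 <= 4 * (D * D + 1) by rewrite -[X in X <= _]muln1 leq_mul2l addn1.
have colours_gt0 : 0 < #|'I_r| by rewrite card_ord.
have [f avoid] := lovasz_local_lemma overloaded_depends card_A card_dep q_ge4 colours_gt0.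
exists f => v i; have := avoid v; rewrite inE negb_exists => /forallP/(_ i).
by rewrite -ltnNge.
Qed.

End ColourClasses.

Lemma ffact_leq_expn n m : n ^_ m <= n ^ m.
Proof.
rewrite ffact_prod -[X in _ ^ X](card_ord m) -prod_nat_const.
by apply: leq_prod => i _; apply: leq_subr.
Qed.

Local Open Scope R_scope.

Lemma INR_expn (m n : nat) : INR (m ^ n)%N = INR m ^ n.
Proof. by elim: n => // n IH; rewrite expnS -multE mult_INR IH. Qed.

Lemma exp_pow (x : R) (n : nat) : exp x ^ n = exp (INR n * x).
Proof.
elim: n => [|n IH]; first by rewrite Rmult_0_l exp_0.
by rewrite S_INR Rmult_plus_distr_r Rmult_1_l exp_plus -IH /=; ring.
Qed.

Lemma exp1_le : exp 1 <= 2.767.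
Proof.
have exp_32 : exp (1 / 32) <= 32 / 31.
  have := exp_ineq1_le (- (1 / 32)); rewrite exp_Ropp.
  have := exp_pos (1 / 32); move: (exp (1 / 32)) => y y_gt0 h.
  have yV : y * / y = 1 by field; lra.
  nra.
have -> : exp 1 = exp (1 / 32) ^ 32 by rewrite exp_pow; f_equal; simpl; field.
apply: Rle_trans (_ : (32 / 31) ^ 32 <= _); last by simpl; lra.
by apply: pow_incr; split; [apply: Rlt_le; apply: exp_pos|].
Qed.

Lemma pow_succ_le_exp (n : nat) : (0 < n)%N -> (INR n + 1) ^ n <= exp 1 * INR n ^ n.
Proof.
move=> n_gt0; have n_pos : 0 < INR n by apply: lt_0_INR; apply/ltP.
have -> : INR n + 1 = (1 + / INR n) * INR n by field; lra.
rewrite Rpow_mult_distr; apply: Rmult_le_compat_r; first by apply: pow_le; lra.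
have -> : exp 1 = exp (/ INR n) ^ n by rewrite exp_pow; f_equal; field; lra.
apply: pow_incr; split; last exact: exp_ineq1_le.
by have := Rinv_0_lt_compat _ n_pos; lra.
Qed.

Lemma pow_le_fact_exp (n : nat) : INR n.+1 ^ n.+1 <= INR n.+1`! * exp 1 ^ n.
Proof.
elim: n => [|n IH]; first by rewrite /=; lra.
rewrite factS -multE mult_INR [INR n.+2]S_INR -!tech_pow_Rmult.
set X := INR n.+1 in IH *; have X_pos : 0 < X by apply: lt_0_INR; lia.
rewrite Rmult_assoc; apply: Rmult_le_compat_l; first lra.
apply: Rle_trans (pow_succ_le_exp (ltn0Sn n)) _; rewrite -/X.
by have := exp_pos 1; nra.
Qed.

Lemma bin_mul_pow_le (D m : nat) :
  INR 'C(D, m.+1) * INR m.+1 ^ m.+1 <= INR D ^ m.+1 * exp 1 ^ m.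
Proof.
apply: Rle_trans (_ : INR 'C(D, m.+1) * (INR m.+1`! * exp 1 ^ m) <= _).
  exact: Rmult_le_compat_l (pos_INR _) (pow_le_fact_exp m).
rewrite -Rmult_assoc -mult_INR multE bin_ffact -INR_expn.
apply: Rmult_le_compat_r; first by apply: pow_le; apply: Rlt_le; apply: exp_pos.
by apply: le_INR; apply/leP; apply: ffact_leq_expn.
Qed.

Lemma pow177_le_pow200 (k : nat) : (32 <= k)%N -> 512 * 177.1 ^ k <= 200 ^ k * INR k.+1.
Proof.
move=> k_ge; have [j ->] : exists j, k = (32 + j)%N by exists (k - 32)%N; lia.
have split_pow x : x ^ (32 + j) = x ^ 32 * x ^ j by exact: pow_add.
have base : 512 * 177.1 ^ 32 <= 200 ^ 32 * 33 by simpl; lra.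
have step : 177.1 ^ j <= 200 ^ j by apply: pow_incr; lra.
have k_ge' : 33 <= INR (32 + j).+1.
  by rewrite -[33]/(IZR (Z.of_nat 33)) -INR_IZR_INZ; apply: le_INR; lia.
have a_pos : 0 < 177.1 ^ j by apply: pow_lt; lra.
have b_pos : 0 < 200 ^ 32 by apply: pow_lt; lra.
rewrite !split_pow; apply: Rle_trans (_ : 200 ^ 32 * 33 * 177.1 ^ j <= _).
  by rewrite -Rmult_assoc; apply: Rmult_le_compat_r; lra.
by rewrite !Rmult_assoc; apply: Rmult_le_compat_l; nra.
Qed.

Lemma lll_condition_numeric (d r c : R) (k : nat) :
  (32 <= k)%N -> 1 <= d -> d < 4 ^ k.+1 -> 200 * d < r * INR k.+1 -> 0 <= c ->
  c * INR k.+1 ^ k.+1 <= d ^ k.+1 * exp 1 ^ k ->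
  4 * (d * d + 1) * c * r <= r ^ k.+1.
Proof.
(* With m = k + 1, the two hypotheses reduce the claim to
   4 (d^2 + 1) d e^k <= 200^k m, which holds since d^3 < 64^m and 64 e < 177.1. *)
move=> k_ge d_ge d_lt r_big c_ge bin_le; set M := INR k.+1 in r_big bin_le *.
have M_pos : 0 < M by apply: lt_0_INR; lia.
have r_pos : 0 < r by nra.
have e_pos : 0 < exp 1 ^ k by apply: pow_lt; apply: exp_pos.
have cube : 4 * (d * d + 1) * d <= 512 * 64 ^ k.
  have -> : 64 ^ k = 4 ^ k * 4 ^ k * 4 ^ k by rewrite -!Rpow_mult_distr; f_equal; lra.
  have := pow_lt 4 k; rewrite -tech_pow_Rmult in d_lt; move: (4 ^ k) d_lt => a d_lt a_pos.
  have d_sq : d * d < (4 * a) * (4 * a) by nra.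
  have d_cube : d * d * d < (4 * a) * (4 * a) * (4 * a) by nra.
  have : d <= d * d * d by nra.
  nra.
have central : 4 * (d * d + 1) * d * exp 1 ^ k <= 200 ^ k * M.
  apply: Rle_trans (pow177_le_pow200 k_ge).
  apply: Rle_trans (_ : 512 * 64 ^ k * exp 1 ^ k <= _).
    by apply: Rmult_le_compat_r; lra.
  rewrite Rmult_assoc -Rpow_mult_distr; apply: Rmult_le_compat_l; first lra.
  by apply: pow_incr; have := exp1_le; have := exp_pos 1; lra.
have r_pow : 200 ^ k * d ^ k <= r ^ k * M ^ k.
  by rewrite -!Rpow_mult_distr; apply: pow_incr; lra.
have d_pow : 0 < d ^ k by apply: pow_lt; lra.
rewrite -tech_pow_Rmult Rmult_comm; apply: Rmult_le_compat_l; first lra.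
apply: (Rmult_le_reg_r (M ^ k.+1)); first exact: pow_lt.
rewrite -!tech_pow_Rmult in bin_le *.
apply: Rle_trans (_ : 4 * (d * d + 1) * (d * d ^ k * exp 1 ^ k) <= _).
  by rewrite Rmult_assoc; apply: Rmult_le_compat_l; nra.
apply: Rle_trans (_ : d ^ k * (200 ^ k * M) <= _).
  rewrite (_ : _ * (d * d ^ k * _) = d ^ k * (4 * (d * d + 1) * d * exp 1 ^ k)); last ring.
  by apply: Rmult_le_compat_l; lra.
rewrite (_ : d ^ k * _ = 200 ^ k * d ^ k * M); last ring.
rewrite (_ : r ^ k * _ = r ^ k * M ^ k * M); last ring.
by apply: Rmult_le_compat_r; lra.
Qed.

Lemma ln2_gt0 : 0 < ln 2.
Proof. by rewrite -ln_1; apply: ln_increasing; lra. Qed.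

Lemma log2_pow2 (n : nat) : log2 (2 ^ n) = INR n.
Proof. by rewrite /log2 ln_pow; [field; have := ln2_gt0; lra | lra]. Qed.

Lemma log2_le_compat (x y : R) : 0 < x -> x <= y -> log2 x <= log2 y.
Proof.
move=> x_pos [lt_xy|->]; last lra.
apply: Rmult_le_compat_r; last exact/Rlt_le/ln_increasing.
by apply/Rlt_le/Rinv_0_lt_compat/ln2_gt0.
Qed.

Lemma log2_lt_inv (x y : R) : 0 < x -> 0 < y -> log2 x < log2 y -> x < y.
Proof.
move=> x_pos y_pos lt_log; apply: ln_lt_inv => //.
have := ln2_gt0; rewrite /log2 /Rdiv in lt_log.
by move=> ln2_pos; apply: (Rmult_lt_reg_r (/ ln 2)) => //; apply: Rinv_0_lt_compat.
Qed.

Lemma nat_floor (x : R) : 0 <= x -> exists k : nat, INR k <= x < INR k + 1.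
Proof.
move=> x_ge; have [up_gt up_le] := archimed x.
exists (Z.to_nat (up x - 1)); rewrite INR_IZR_INZ Z2Nat.id; last first.
  have : (0 < up x)%Z by apply: lt_IZR; lra.
  lia.
by rewrite minus_IZR; lra.
Qed.

Lemma half_log2_floor (d : R) : 2 ^ 64 <= d ->
  exists k : nat, [/\ (32 <= k)%N, 0 < log2 d, INR k <= log2 d / 2,
                      log2 d < 2 * INR k.+1 & d < 4 ^ k.+1].
Proof.
move=> d_ge; have d_pos : 0 < d by apply: Rlt_le_trans d_ge; apply: pow_lt; lra.
have L_ge : 64 <= log2 d.
  have -> : 64 = log2 (2 ^ 64) by rewrite log2_pow2 INR_IZR_INZ.
  by apply: log2_le_compat => //; apply: pow_lt; lra.
have [k [kL Lk]] : exists k : nat, INR k <= log2 d / 2 < INR k + 1.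
  by apply: nat_floor; lra.
have L_lt : log2 d < 2 * INR k.+1 by rewrite S_INR; lra.
exists k; split => //; [|lra|].
  by apply/ltP/INR_lt; rewrite [INR 31]INR_IZR_INZ /=; lra.
have -> : 4 ^ k.+1 = 2 ^ (2 * k.+1) by rewrite pow_mult; f_equal; simpl; ring.
apply: log2_lt_inv => //; first by apply: pow_lt; lra.
by rewrite log2_pow2 mult_INR [INR 2]/=; lra.
Qed.

Theorem lemma3 (T : finType) (e : rel T) (e_sym : symmetric e)
  (e_irr : irreflexive e) (r : nat) :
  (2 ^ 64 <= maxdeg e)%N ->
  (INR r - 1 < 400 * INR (maxdeg e) / log2 (INR (maxdeg e)) <= INR r)%R ->
  exists f : T -> 'I_r,
    forall (v : T) (i : 'I_r),
      (INR #|nbhd e v :&: [set u | f u == i]| <= / 2 * log2 (INR (maxdeg e)))%R.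
Proof.
move=> D_ge [_ r_ge]; set D := maxdeg e in D_ge r_ge *.
have d_ge : 2 ^ 64 <= INR D by rewrite (_ : 2 = INR 2) // -INR_expn; apply/le_INR/leP.
have [k [k_ge L_pos kL Lk d_lt]] := half_log2_floor d_ge.
have r_pos : 0 < INR r by apply: Rlt_le_trans r_ge; apply: Rdiv_lt_0_compat; lra.
have r_big : 200 * INR D < INR r * INR k.+1.
  have : 400 * INR D / log2 (INR D) * log2 (INR D) <= INR r * log2 (INR D).
    by apply: Rmult_le_compat_r; lra.
  rewrite /Rdiv Rmult_assoc Rinv_l ?Rmult_1_r; nra.
have r_gt0 : (0 < r)%N by apply/ltP/INR_lt.
have lll_cond : (4 * (D * D + 1) * 'C(D, k.+1) * r <= r ^ k.+1)%N.
  apply/leP/INR_le; rewrite INR_expn -!multE -plusE !mult_INR plus_INR mult_INR.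
  have -> : INR 4 = 4 by rewrite INR_IZR_INZ.
  have d_ge1 : 1 <= INR D by apply: Rle_trans d_ge; apply: pow_R1_Rle; lra.
  exact: lll_condition_numeric k_ge d_ge1 d_lt r_big (pos_INR _) (bin_mul_pow_le D k).
have [f small] := exists_colouring_small_classes e_sym r_gt0 lll_cond.
exists f => v i; apply: Rle_trans (_ : INR k <= _); last lra.
by apply/le_INR/leP; rewrite -ltnS.
Qed.
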